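(* Let $n\ge2$, $k\in\{1,\dots,n\}$ and let $W_1,\dots,W_n$ be the Pauli strings on $n-1$ qubits defined in the context. Then for every $m\in\{1,\dots,n-1\}$, the operator $G_m=iW_{m+1}W_m$ is, up to sign, a Pauli string acting nontrivially on at most two qubits, and these lie among the adjacent qubits $m$ and $m+1$.
   Context: $X_j,Y_j,Z_j$ are Pauli operators on qubit $j$ of an $(n-1)$-qubit system; empty products of $Z$'s are the identity. For $k\ne n$: for $1\le j<k$, $W_j=Y_jZ_{j+1}\cdots Z_{k-1}Y_k$; $W_k=Z_k$; for $k<j<n$, $W_j=X_kZ_{k+1}\cdots Z_{j-1}X_j$; and $W_n=X_kZ_{k+1}\cdots Z_{n-1}$. For $k=n$: for $1\le j<n$, $W_j=-Z_1Z_2\cdots Z_{j-1}X_j$; $W_n=\prod_{j=1}^{n-1}Z_j$. *)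

(* Operators on the (N)-qubit space (C^2)^{(x)N} are
   represented as matrices indexed by computational-basis bit strings. *)
From mathcomp Require Import all_boot all_order all_algebra algC.
Set Implicit Arguments. Unset Strict Implicit. Unset Printing Implicit Defensive.
Import GRing.Theory Num.Theory.
Local Open Scope ring_scope.

(* computational basis of N qubits: qubit i (0-based ordinal) has bit x i *)
Definition bits (N : nat) := {ffun 'I_N -> bool}.

Definition op (N : nat) := bits N -> bits N -> algC.

Definition opmul N (A B : op N) : op N :=
  fun x y => \sum_(z : bits N) A x z * B z y.
Definition opid (N : nat) : op N := fun x y => (x == y)%:R.
Definition opscale N (c : algC) (A : op N) : op N := fun x y => c * A x y.

(* single-qubit Pauli matrices, basis |0> = false, |1> = true *)
Inductive pauli := PI | PX | PY | PZ.

Definition pmat (p : pauli) (a b : bool) : algC :=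
  match p with
  | PI => (a == b)%:R
  | PX => (a != b)%:R
  | PY => if a == b then 0 else if a then 'i else - 'i
  | PZ => if a == b then (if a then -1 else 1) else 0
  end.

Definition pstring N (p : 'I_N -> pauli) : op N :=
  fun x y => \prod_(i : 'I_N) pmat (p i) (x i) (y i).

(* sigma acting on qubit j (1-based, j in 1..N), identity elsewhere *)
Definition on_qubit N (s : pauli) (j : nat) : op N :=
  pstring (fun i : 'I_N => if i.+1 == j then s else PI).

Definition Xq N j : op N := @on_qubit N PX j.
Definition Yq N j : op N := @on_qubit N PY j.
Definition Zq N j : op N := @on_qubit N PZ j.
Arguments Xq : clear implicits.
Arguments Yq : clear implicits.
Arguments Zq : clear implicits.

Definition opprod N (l : seq (op N)) : op N := foldr (@opmul N) (@opid N) l.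

(* Z_a Z_{a+1} ... Z_{b-1}  (identity if b <= a) *)
Definition Zs N (a b : nat) : op N := @opprod N [seq Zq N j | j <- iota a (b - a)].
Arguments Zs : clear implicits.

Definition W (n k j : nat) : op (n.-1) :=
  let N := n.-1 in
  if (k != n)%N then
    if (j < k)%N then opmul (Yq N j) (opmul (Zs N j.+1 k) (Yq N k))
    else if (j == k)%N then Zq N k
    else if (j < n)%N then opmul (Xq N k) (opmul (Zs N k.+1 j) (Xq N j))
    else opmul (Xq N k) (Zs N k.+1 n)
  else
    if (j < n)%N then opscale (-1) (opmul (Zs N 1 j) (Xq N j))
    else Zs N 1 n.
Arguments W : clear implicits.

(* Every W_j is, up to a sign, a Pauli string.  Consecutive strings W_(m+1) and
   W_m carry the same letter on every qubit other than m and m+1: the strings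
   of Z's they contain differ by exactly one factor, next to qubit m.  So the
   product W_(m+1) W_m is the identity away from m and m+1, and the phases
   picked up on those two qubits multiply to +-i because W_(m+1) and W_m
   anticommute; multiplying by i leaves a sign. *)
From mathcomp Require Import all_boot all_order all_algebra algC zify.
From Stdlib Require Import FunctionalExtensionality.
Import GRing.Theory Num.Theory.
Local Open Scope ring_scope.

Ltac case_ifs := repeat (case: ifP => ?; try by exfalso; lia).

Lemma op_ext N (A B : op N) : (forall x y, A x y = B x y) -> A = B.
Proof. by move=> eqAB; do 2!apply: functional_extensionality => ?. Qed.

Lemma opmulZl N c (A B : op N) : opmul (opscale c A) B = opscale c (opmul A B).
Proof.
by apply: op_ext => x y; rewrite /opmul /opscale mulr_sumr; apply: eq_bigr => z _; rewrite mulrA.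
Qed.

Lemma opmulZr N c (A B : op N) : opmul A (opscale c B) = opscale c (opmul A B).
Proof.
by apply: op_ext => x y; rewrite /opmul /opscale mulr_sumr; apply: eq_bigr => z _; rewrite mulrCA.
Qed.

Lemma opscaleA N c d (A : op N) : opscale c (opscale d A) = opscale (c * d) A.
Proof. by apply: op_ext => x y; rewrite /opscale mulrA. Qed.

Lemma opscale1 N (A : op N) : opscale 1 A = A.
Proof. by apply: op_ext => x y; rewrite /opscale mul1r. Qed.

Definition pauli_mul (a b : pauli) : pauli :=
  match a, b with
  | PI, c | c, PI => c
  | PX, PX | PY, PY | PZ, PZ => PI
  | PX, PY | PY, PX => PZ
  | PY, PZ | PZ, PY => PX
  | PZ, PX | PX, PZ => PY
  end.

Definition pauli_phase (a b : pauli) : algC :=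
  match a, b with
  | PX, PY | PY, PZ | PZ, PX => 'i
  | PY, PX | PZ, PY | PX, PZ => - 'i
  | _, _ => 1
  end.

Lemma pauli_mulvv a : pauli_mul a a = PI.
Proof. by case: a. Qed.

Lemma pauli_phasevv a : pauli_phase a a = 1.
Proof. by case: a. Qed.

Lemma pauli_phaseI a b : a = PI \/ b = PI -> pauli_phase a b = 1.
Proof. by case=> ->; [case: b | case: a]. Qed.

Lemma mulCii : 'i * 'i = -1 :> algC.
Proof. by rewrite -expr2 sqrCi. Qed.

Lemma pmat_mul a b x y :
  \sum_(c : bool) pmat a x c * pmat b c y = pauli_phase a b * pmat (pauli_mul a b) x y.
Proof.
rewrite big_bool; case: a; case: b; case: x; case: y;
  by rewrite /= ?(mul0r, mulr0, mul1r, mulr1, add0r, addr0, mulNr, mulrN, opprK, mulCii).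
Qed.

Lemma pstring_mul N (p q : 'I_N -> pauli) :
  opmul (pstring p) (pstring q) =
  opscale (\prod_i pauli_phase (p i) (q i)) (pstring (fun i => pauli_mul (p i) (q i))).
Proof.
apply: op_ext => x y; rewrite /opmul /opscale /pstring.
under [LHS]eq_bigr => z _ do rewrite -big_split /=.
rewrite -big_split /= -(bigA_distr_bigA (fun i c => pmat (p i) (x i) c * pmat (q i) c (y i))).
by apply: eq_bigr => i _; rewrite pmat_mul.
Qed.

Lemma pstring_mul_disjoint N (p q : 'I_N -> pauli) :
  (forall i, p i = PI \/ q i = PI) ->
  opmul (pstring p) (pstring q) = pstring (fun i => pauli_mul (p i) (q i)).
Proof.
move=> disj; rewrite pstring_mul big1 ?opscale1 // => i _.
exact: pauli_phaseI.
Qed.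

Lemma opid_pstring N : @opid N = pstring (fun _ : 'I_N => PI).
Proof.
apply: op_ext => x y; rewrite /opid /pstring /=.
have [<-|neq_xy] := eqVneq x y; first by rewrite big1 // => i _; rewrite eqxx.
have /existsP[i neq_i] : [exists i, x i != y i].
  apply: contraR neq_xy; rewrite negb_exists => /forallP eq_xy.
  by apply/eqP/ffunP => i; apply/eqP/negbNE.
by rewrite (bigD1 i) //= (negbTE neq_i) mul0r.
Qed.

Lemma opprod_Zq_iota N a l :
  opprod [seq Zq N j | j <- iota a l] =
  pstring (fun i : 'I_N => if (a <= i.+1 < a + l)%N then PZ else PI).
Proof.
elim: l a => [|l IHl] a /=.
  by rewrite opid_pstring; congr pstring; apply: functional_extensionality => i; case_ifs.
rewrite IHl /Zq /on_qubit pstring_mul_disjoint => [|i]; last by case_ifs; auto.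
by congr pstring; apply: functional_extensionality => i; case_ifs.
Qed.

Lemma Zs_pstring N a b :
  Zs N a b = pstring (fun i : 'I_N => if (a <= i.+1 < b)%N then PZ else PI).
Proof.
by rewrite /Zs opprod_Zq_iota; congr pstring; apply: functional_extensionality => i; case_ifs.
Qed.

Definition W_letter (n k j t : nat) : pauli :=
  if k != n then
    if (j < k)%N then
      if (t == j) || (t == k) then PY else if (j < t < k)%N then PZ else PI
    else if j == k then (if t == k then PZ else PI)
    else if (j < n)%N then
      if (t == k) || (t == j) then PX else if (k < t < j)%N then PZ else PI
    else if t == k then PX else if (k < t < n)%N then PZ else PI
  else if (j < n)%N then (if t == j then PX else if (1 <= t < j)%N then PZ else PI)
  else if (1 <= t < n)%N then PZ else PI.

Definition W_sign (n k j : nat) : algC := if (k == n) && (j < n)%N then -1 else 1.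

Lemma W_pstring n k j :
  W n k j = opscale (W_sign n k j) (pstring (fun i : 'I_n.-1 => W_letter n k j i.+1)).
Proof.
rewrite /W /W_sign /W_letter /Xq /Yq /Zq /on_qubit !Zs_pstring.
case_ifs; rewrite ?opscale1 ?pstring_mul_disjoint; try by move=> i; case_ifs; auto.
all: try congr opscale.
all: by congr pstring; apply: functional_extensionality => i; case_ifs.
Qed.

Lemma W_letter_adjacent n k m t :
  t != m -> t != m.+1 -> W_letter n k m.+1 t = W_letter n k m t.
Proof. by rewrite /W_letter => ? ?; case_ifs. Qed.

Definition W_phase (n k m t : nat) : algC :=
  pauli_phase (W_letter n k m.+1 t) (W_letter n k m t).

Lemma W_phase_off n k m t : t != m -> t != m.+1 -> W_phase n k m t = 1.
Proof. by move=> ? ?; rewrite /W_phase W_letter_adjacent // pauli_phasevv. Qed.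

Definition adjacent_sign (n k m : nat) : algC :=
  'i * W_sign n k m.+1 * W_sign n k m *
  (W_phase n k m m * (if (m < n.-1)%N then W_phase n k m m.+1 else 1)).

Lemma adjacent_sign_pm1 n k m :
  (1 <= k <= n)%N -> (1 <= m <= n.-1)%N ->
  adjacent_sign n k m = 1 \/ adjacent_sign n k m = -1.
Proof.
rewrite /adjacent_sign /W_phase /W_sign /W_letter => ? ?; case_ifs;
  rewrite /= ?(mulr1, mul1r, mulrN, mulNr, opprK, mulCii); auto.
Qed.

Lemma prod_ord_adjacent (R : comPzSemiRingType) N m (F : nat -> R) :
  (1 <= m <= N)%N -> (forall t, t != m -> t != m.+1 -> F t = 1) ->
  \prod_(i < N) F i.+1 = F m * (if (m < N)%N then F m.+1 else 1).
Proof.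
move=> hm F1; rewrite -(big_mkord xpredT (fun i => F i.+1)).
have Fout i : (i.+1 < m)%N || (m.+1 < i.+1)%N -> F i.+1 = 1 by move=> ?; apply: F1; lia.
rewrite (big_cat_nat _ (n := m.-1)) ?(big_ltn (m := m.-1)) ?prednK /=; try lia.
rewrite big_nat_cond big1 ?mul1r => [|i /andP[/andP[_ ?] _]]; last by apply: Fout; lia.
congr (_ * _); case: ifP => ltmN; last by rewrite big_geq //; lia.
rewrite big_ltn // big_nat_cond big1 ?mulr1 // => i /andP[/andP[? _] _].
by apply: Fout; lia.
Qed.

Theorem lemma4 (n k : nat) (hn : (2 <= n)%N) (hk : (1 <= k <= n)%N) (m : nat)
  (hm : (1 <= m <= n.-1)%N) :
  exists (s : algC) (p : 'I_(n.-1) -> pauli),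
    (s = 1 \/ s = -1) /\
    opscale 'i (opmul (W n k m.+1) (W n k m)) = opscale s (pstring p) /\
    (forall i : 'I_(n.-1), p i <> PI -> i.+1 = m \/ i.+1 = m.+1).
Proof.
exists (adjacent_sign n k m).
exists (fun i => pauli_mul (W_letter n k m.+1 i.+1) (W_letter n k m i.+1)).
split; first exact: adjacent_sign_pm1.
split.
  rewrite !W_pstring opmulZl opmulZr pstring_mul !opscaleA.
  by rewrite (@prod_ord_adjacent _ _ m _ hm (@W_phase_off n k m)).
move=> i; case: (eqVneq i.+1 m) => [|ne_m]; first by left.
case: (eqVneq i.+1 m.+1) => [|ne_m1]; first by right.
by rewrite W_letter_adjacent // pauli_mulvv.
Qed.
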